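(* Let $p\ge2$, $X=\{0,1,\dots,p\}$, and for $w\in X^\infty$ let $I_w=\{z\in X^\infty:\Gamma^p_z\text{ and }\Gamma^p_w\text{ are isomorphic}\}$. Then $\nu(I_w)=0$ for every $w\in X^\infty$.
   Context: $\mathcal G_{S_p}$ is the group generated by $e_1,\dots,e_p$ acting on $X^\infty$ by $e_i(0x)=i\,e_i(x)$, $e_i(ix)=0x$, $e_i(jx)=jx$ for $j\notin\{0,i\}$; $\Gamma^p_w$ is the infinite Schreier graph with vertex set the orbit of $w$ and an edge joining $x$ and $e_i(x)$ for each vertex $x$ and each $i$; isomorphism is isomorphism of unrooted graphs. $\nu$ is the uniform (Bernoulli product) measure on $X^\infty$. *)

From mathcomp Require Import all_boot all_order all_algebra.
From Stdlib Require Import Relations.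
Set Implicit Arguments. Unset Strict Implicit. Unset Printing Implicit Defensive.
Import Order.TTheory GRing.Theory Num.Theory.

(* Alphabet X = {0,1,...,p} is 'I_p.+1 ; X^infty = infinite sequences. *)
Definition word (p : nat) := nat -> 'I_p.+1.

(* The generator e_i, written out pointwise: it is the unique map with
   e_i(0x) = i e_i(x), e_i(ix) = 0x, e_i(jx) = jx (j notin {0,i}). *)
Definition gen (p : nat) (i : 'I_p.+1) (x : word p) : word p :=
  fun k => if [forall m : 'I_k, x m == ord0]
           then (if x k == ord0 then i else if x k == i then ord0 else x k)
           else x k.

Definition step (p : nat) (x y : word p) : Prop :=
  exists i : 'I_p.+1, (0 < i)%N /\ (y = gen i x \/ x = gen i y).

Definition in_orbit (p : nat) (w z : word p) : Prop :=
  clos_refl_trans (word p) (@step p) w z.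

Definition bij_on (T U : Type) (A : T -> Prop) (B : U -> Prop) (f : T -> U) :=
  [/\ forall x, A x -> B (f x),
      forall x y, A x -> A y -> f x = f y -> x = y
    & forall y, B y -> exists x, A x /\ f x = y].

(* Edges of Gamma^p_w: pairs (x, i) with x in the orbit of w, 1 <= i <= p;
   the edge (x, i) joins x and e_i(x) (multigraph, loops allowed). *)
Definition is_edge (p : nat) (w : word p) (E : word p * 'I_p.+1) : Prop :=
  in_orbit w E.1 /\ (0 < E.2)%N.

(* Isomorphism of unrooted (multi)graphs Gamma^p_z ~ Gamma^p_w:
   a vertex bijection f and an edge bijection g preserving endpoints
   (as unordered pairs). *)
Definition schreier_iso (p : nat) (z w : word p) : Prop :=
  exists (f : word p -> word p) (g : word p * 'I_p.+1 -> word p * 'I_p.+1),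
    [/\ bij_on (in_orbit z) (in_orbit w) f,
        bij_on (@is_edge p z) (@is_edge p w) g
      & forall E, is_edge z E ->
          let x := E.1 in let i := E.2 in
          let y := (g E).1 in let j := (g E).2 in
          (f x = y /\ f (gen i x) = gen j y) \/
          (f x = gen j y /\ f (gen i x) = y)].

Definition Iset (p : nat) (w : word p) : word p -> Prop :=
  fun z => schreier_iso z w.

Definition cylinder (p : nat) (u : seq 'I_p.+1) (x : word p) : Prop :=
  forall k, (k < size u)%N -> x k = nth ord0 u k.

(* nu-null sets for the uniform Bernoulli measure nu on X^infty:
   outer measure zero, i.e. for every eps > 0 the set is covered by countably
   many cylinders [u_n] with sum_n nu([u_n]) = sum_n (p+1)^(-|u_n|) <= eps. *)
Definition nu_null (p : nat) (A : word p -> Prop) : Prop :=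
  forall eps : rat, (0 < eps)%R ->
    exists U : nat -> seq 'I_p.+1,
      (forall x, A x -> exists n, cylinder (U n) x) /\
      (forall N : nat, (\sum_(n < N) (((p.+1) ^ size (U n))%:R)^-1 <= eps)%R).

(* For p >= 2 a vertex of a Schreier graph carries a loop iff its first letter
   is nonzero, so isomorphisms preserve the hubs, the vertices 0y.  A non-hub kc
   is adjacent to exactly the hubs 0c and 0(e_k^-1 c), and y ~ y' iff some
   non-hub is adjacent to exactly the hubs 0y and 0y'.  Hence an isomorphism
   f : Gamma_z -> Gamma_w induces an isomorphism of the graphs of the tails,
   sending the tail of z to one of the (at most two) tails of the hub
   neighbours of f z.  Iterating, if some isomorphism sends z to v, the hub
   status of every letter of z is dictated by v, and the admissible prefixes of
   length n number at most b_n, where a_(n+1) = b_n, b_(n+1) = p (a_n + b_n).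
   As b_n grows like ((p + sqrt (p^2 + 4p)) / 2)^n and this base is < p + 1,
   the set of such z is nu-null; I_w is the countable union of these sets over
   the v in the orbit of w. *)

From mathcomp Require Import all_boot all_order all_algebra.
From mathcomp Require Import zify ring boolp.
From Stdlib Require Import Relations.
Set Implicit Arguments. Unset Strict Implicit. Unset Printing Implicit Defensive.
Arguments rt_trans {A R x y z}. Arguments rt_step {A R x y}. Arguments rt_refl {A R x}.

(** * Words and the generators *)

Lemma forall_ordS k (P : pred nat) :
  [forall m : 'I_k.+1, P m] = P 0 && [forall m : 'I_k, P m.+1].
Proof.
apply/forallP/andP => [H|[P0 /forallP H] [[|m] lt_m]] //.
  by split; [exact: (H ord0) | apply/forallP => m; exact: (H (lift ord0 m))].
exact: (H (Ordinal (lt_m : m < k))).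
Qed.

Section Words.
Variable p : nat.
Implicit Types (x y : word p) (a i : 'I_p.+1).

Definition wcons a y : word p := fun k => if k is k'.+1 then y k' else a.
Definition shift x : word p := fun k => x k.+1.

Lemma wcons_shift x : wcons (x 0) (shift x) = x.
Proof. by apply: funext => -[|k]. Qed.

Lemma wcons_inj a b y y' : wcons a y = wcons b y' -> a = b /\ y = y'.
Proof. by move=> e; split; [apply: (congr1 (fun f => f 0) e) | apply: (congr1 shift e)]. Qed.

Definition geninv i x : word p :=
  fun k => if [forall m : 'I_k, x m == i]
           then (if x k == i then ord0 else if x k == ord0 then i else x k)
           else x k.

Lemma gen_cons i a y :
  gen i (wcons a y) = if a == ord0 then wcons i (gen i y)
                      else if a == i then wcons ord0 y else wcons a y.
Proof.
apply: funext => -[|k]; rewrite /gen.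
  rewrite (_ : [forall m : 'I_0, _]) /=; last by apply/forallP => -[].
  by case: ifP => // _; case: ifP.
rewrite (forall_ordS _ (fun m => wcons a y m == ord0)) /=.
by case: eqP => //= _; case: ifP.
Qed.

Lemma gen_head x : x 0 != ord0 -> gen (x 0) x = wcons ord0 (shift x).
Proof. by move=> x0; rewrite -{2}(wcons_shift x) gen_cons (negbTE x0) eqxx. Qed.

Lemma geninv_cons i a y :
  geninv i (wcons a y) = if a == i then wcons ord0 (geninv i y)
                         else if a == ord0 then wcons i y else wcons a y.
Proof.
apply: funext => -[|k]; rewrite /geninv.
  rewrite (_ : [forall m : 'I_0, _]) /=; last by apply/forallP => -[].
  by case: ifP => // _; case: ifP.
rewrite (forall_ordS _ (fun m => wcons a y m == i)) /=.
by case: eqP => //= _; case: ifP.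
Qed.

Lemma geninv_gen_cons i a y : i != ord0 ->
  geninv i (gen i (wcons a y)) = wcons a (if a == ord0 then geninv i (gen i y) else y).
Proof.
move=> i0; rewrite gen_cons; case: (eqVneq a ord0) => [->|a0].
  by rewrite geninv_cons eqxx.
case: (eqVneq a i) => [->|ai]; rewrite geninv_cons.
  by rewrite eq_sym (negbTE i0) eqxx.
by rewrite (negbTE ai) (negbTE a0).
Qed.

Lemma gen_geninv_cons i a y : i != ord0 ->
  gen i (geninv i (wcons a y)) = wcons a (if a == i then gen i (geninv i y) else y).
Proof.
move=> i0; rewrite geninv_cons; case: (eqVneq a i) => [->|ai].
  by rewrite gen_cons eqxx.
case: (eqVneq a ord0) => [->|a0]; rewrite gen_cons.
  by rewrite (negbTE i0) eqxx.
by rewrite (negbTE ai) (negbTE a0).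
Qed.

Lemma geninvK i : i != ord0 -> cancel (gen i) (geninv i).
Proof.
move=> i0 x; apply: funext => k; elim: k x => [|k IH] x;
  by rewrite -[x]wcons_shift geninv_gen_cons //=; case: ifP.
Qed.

Lemma genK i : i != ord0 -> cancel (geninv i) (gen i).
Proof.
move=> i0 x; apply: funext => k; elim: k x => [|k IH] x;
  by rewrite -[x]wcons_shift gen_geninv_cons //=; case: ifP.
Qed.

End Words.

(** * The Schreier graph *)

Section SchreierGraph.
Variable p : nat.
Implicit Types (x y z : word p) (a i k : 'I_p.+1).

Lemma ord_gt0 i : (0 < i)%N = (i != ord0).
Proof. by rewrite lt0n; congr negb; apply/eqP/eqP => [|->] //; apply: val_inj. Qed.

Lemma step_sym x y : step x y -> step y x.
Proof. by case=> i [hi [e|e]]; exists i; split => //; [right|left]. Qed.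

Lemma orbit_sym x y : in_orbit x y -> in_orbit y x.
Proof.
elim=> [u v /step_sym|u|u v t _ h1 _ h2]; [exact: rt_step|exact: rt_refl|exact: rt_trans h2 h1].
Qed.

Lemma orbit_step z x y : in_orbit z x -> step x y -> in_orbit z y.
Proof. by move=> zx /rt_step; apply: rt_trans. Qed.

Lemma step_gen x i : (0 < i)%N -> step x (gen i x).
Proof. by exists i; split => //; left. Qed.

Lemma step_loop : (2 <= p)%N -> forall x, step x x <-> x 0 != ord0.
Proof.
move=> p2 x; rewrite -(wcons_shift x) /=; move: (x 0) (shift x) => a y; split.
  case=> i [+ e]; rewrite ord_gt0 => i0.
  have {e} : gen i (wcons a y) = wcons a y by case: e.
  rewrite gen_cons; case: (eqVneq a ord0) => [->|//] /wcons_inj[e _].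
  by rewrite e eqxx in i0.
move=> a0; have [i i0 ai] : exists2 i : 'I_p.+1, (0 < i)%N & a != i.
  have [lt1 lt2] : (1 < p.+1)%N /\ (2 < p.+1)%N by lia.
  have [a1|a1] := eqVneq a (inord 1).
    by exists (inord 2); rewrite ?a1 -?val_eqE /= !inordK.
  by exists (inord 1); rewrite // inordK.
by exists i; split => //; left; rewrite gen_cons (negbTE a0) (negbTE ai).
Qed.

Lemma step_to_hub k c y : k != ord0 ->
  step (wcons k c) (wcons ord0 y) -> y = c \/ c = gen k y.
Proof.
move=> k0 [i [_ [|]]]; rewrite gen_cons ?eqxx ?(negbTE k0).
  by case: (eqVneq k i) => [_|_] /wcons_inj[e ->]; [left|rewrite e eqxx in k0].
by case/wcons_inj=> <- ->; right.
Qed.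

Lemma shift_gen i x :
  shift (gen i x) = if x 0 == ord0 then gen i (shift x) else shift x.
Proof. by rewrite -{1}(wcons_shift x) gen_cons; case: ifP => // _; case: ifP. Qed.

Lemma orbit_shift z x : in_orbit z x -> in_orbit (shift z) (shift x).
Proof.
have shift_step u i : (0 < i)%N -> in_orbit (shift u) (shift (gen i u)).
  by move=> i0; rewrite shift_gen; case: ifP => _; [apply/rt_step/step_gen|apply: rt_refl].
elim=> [u v [i [i0 [->|->]]]|u|u v t _ h1 _ h2].
- exact: shift_step.
- exact/orbit_sym/shift_step.
- exact: rt_refl.
- exact: rt_trans h1 h2.
Qed.

Lemma orbit_wcons_head a b y : in_orbit (wcons a y) (wcons b y).
Proof.
suff to_hub c : in_orbit (wcons c y) (wcons ord0 y).
  exact: rt_trans (to_hub a) (orbit_sym (to_hub b)).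
have [->|c0] := eqVneq c ord0; first exact: rt_refl.
by apply: rt_step; exists c; split; [rewrite ord_gt0|left; rewrite gen_cons (negbTE c0) eqxx].
Qed.

Lemma orbit_wcons_hub y y' : in_orbit y y' -> in_orbit (wcons ord0 y) (wcons ord0 y').
Proof.
have hub_gen u i : (0 < i)%N -> in_orbit (wcons ord0 u) (wcons ord0 (gen i u)).
  move=> i0; apply: rt_trans (orbit_wcons_head i ord0 (gen i u)).
  by apply/rt_step; exists i; split => //; left; rewrite gen_cons eqxx.
elim=> [u v [i [i0 [->|->]]]|u|u v t _ h1 _ h2].
- exact: hub_gen.
- exact/orbit_sym/hub_gen.
- exact: rt_refl.
- exact: rt_trans h1 h2.
Qed.

Lemma orbit_wcons z a y : in_orbit z (wcons a y) <-> in_orbit (shift z) y.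
Proof.
split=> [/orbit_shift //|/orbit_wcons_hub zy].
have z_hub : in_orbit z (wcons ord0 (shift z)).
  by rewrite -{1}(wcons_shift z); apply: orbit_wcons_head.
exact: rt_trans z_hub (rt_trans zy (orbit_wcons_head _ _ _)).
Qed.

End SchreierGraph.

Section Hubs.
Variable p : nat.
Implicit Types (t a b c h y : word p).

Definition links t a b :=
  [/\ t 0 != ord0, step t (wcons ord0 a), step t (wcons ord0 b)
    & forall h, h 0 = ord0 -> step t h -> h = wcons ord0 a \/ h = wcons ord0 b].

Lemma links_sym t a b : links t a b -> links t b a.
Proof. by case=> t0 ta tb hubs; split => // h h0 /(hubs _ h0)[]; [right|left]. Qed.

Lemma hub_eq h : h 0 = ord0 -> h = wcons ord0 (shift h).
Proof. by move=> h0; rewrite -{1}(wcons_shift h) h0. Qed.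

Lemma links_gen (i : 'I_p.+1) a : (0 < i)%N -> links (wcons i (gen i a)) a (gen i a).
Proof.
move=> /[dup] i_gt0; rewrite ord_gt0 => i0; split => //.
- by exists i; split => //; right; rewrite gen_cons eqxx.
- by exists i; split => //; left; rewrite gen_cons (negbTE i0) eqxx.
move=> h /hub_eq -> /(step_to_hub i0)[->|/(congr1 (geninv i))]; first by right.
by rewrite !geninvK // => <-; left.
Qed.

Lemma step_links a b : step a b <-> exists t, links t a b.
Proof.
split=> [[i [i0 [->|->]]]|[t [t0 ta tb hubs]]].
- by exists (wcons i (gen i a)); exact: links_gen.
- by exists (wcons i (gen i b)); apply/links_sym/links_gen.
move: t0 ta tb hubs; rewrite -(wcons_shift t); move: (t 0) (shift t) => k c k0 ta tb hubs.
have k_gt0 : (0 < k)%N by rewrite ord_gt0.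
(* kc is adjacent to the hubs 0c and 0(e_k^-1 c) only, so {0a, 0b} is this pair. *)
have [ac|ca] := step_to_hub k0 ta; have [bc|cb] := step_to_hub k0 tb.
- have : step (wcons k c) (wcons ord0 (geninv k c)).
    by exists k; split => //; right; rewrite gen_cons eqxx genK.
  move=> /(hubs _ erefl); rewrite ac bc => -[] /wcons_inj[_ e];
    by exists k; split => //; left; rewrite -{2}e genK.
- by exists k; split => //; right; rewrite ac.
- by exists k; split => //; left; rewrite bc.
have eab : a = b by rewrite -(geninvK k0 a) -(geninvK k0 b) -ca -cb.
have /(hubs _ erefl) ea : step (wcons k c) (wcons ord0 c).
  by exists k; split => //; left; rewrite gen_cons (negbTE k0) eqxx.
have {}ea : c = a by rewrite -eab in ea *; case: ea => /wcons_inj[].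
by exists k; split => //; left; rewrite -eab -{1}ea.
Qed.

End Hubs.

(** * Isomorphisms descend to tails *)

Section Isomorphisms.
Variable p : nat.
Implicit Types (x y z w v : word p) (f g : word p -> word p).

Definition adj_iso z w f :=
  bij_on (in_orbit z) (in_orbit w) f /\
  (forall x y, in_orbit z x -> in_orbit z y -> step x y <-> step (f x) (f y)).

Lemma schreier_iso_adj z w : schreier_iso z w -> exists f, adj_iso z w f.
Proof.
case=> f [h [bf [h_edge _ h_surj] h_ends]]; exists f; split => // x y zx zy.
have [f_orb f_inj _] := bf.
split=> [[i [i0 [->|->]]]|].
- have E : is_edge z (x, i) by [].
  have [_ j0] := h_edge _ E.
  by case: (h_ends _ E) => /= -[-> ->]; exists (h (x, i)).2; split => //; [left|right].
- have E : is_edge z (y, i) by [].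
  have [_ j0] := h_edge _ E.
  by case: (h_ends _ E) => /= -[-> ->]; exists (h (y, i)).2; split => //; [right|left].
suff edge_back u v (j : 'I_p.+1) : in_orbit z u -> in_orbit z v -> (0 < j)%N ->
    f v = gen j (f u) -> step u v.
  by case=> j [j0 [e|e]]; [exact: edge_back e|apply/step_sym; exact: edge_back e].
move=> zu zv j0 e.
have [E [[zE E0] hE]] := h_surj (f u, j) (conj (f_orb _ zu) j0).
have zE' : in_orbit z (gen E.2 E.1) by apply: orbit_step zE (step_gen _ E0).
case: (h_ends _ (conj zE E0)); rewrite hE /= -e => -[e1 e2].
  by exists E.2; split => //; left; rewrite -(f_inj _ _ zE' zv e2) (f_inj _ _ zE zu e1).
by exists E.2; split => //; right; rewrite -(f_inj _ _ zE' zu e2) (f_inj _ _ zE zv e1).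
Qed.

Lemma adj_iso_inv z w f : adj_iso z w f ->
  exists g, [/\ adj_iso w z g, forall x, in_orbit z x -> g (f x) = x
              & forall y, in_orbit w y -> f (g y) = y].
Proof.
case=> -[f_orb f_inj f_surj] f_step.
have [g gP] : exists g, forall y, in_orbit w y -> in_orbit z (g y) /\ f (g y) = y.
  suff /choice[g gP] : forall y, exists x, in_orbit w y -> in_orbit z x /\ f x = y.
    by exists g.
  move=> y; have [/f_surj[x [zx <-]]|wy] := pselect (in_orbit w y).
    by exists x.
  by exists y.
have gK x : in_orbit z x -> g (f x) = x.
  by move=> zx; have [zgx /f_inj->] := gP _ (f_orb _ zx).
exists g; split=> [|//|y /gP[] //]; split; first split.
- by move=> y /gP[].
- by move=> y y' /gP[_ fgy] /gP[_ fgy'] e; rewrite -fgy -fgy' e.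
- by move=> x zx; exists (f x); split; [exact: f_orb|exact: gK].
move=> y y' /gP[zgy fgy] /gP[zgy' fgy'].
by rewrite -{1}fgy -{1}fgy'; symmetry; apply: f_step.
Qed.

Hypothesis p2 : (2 <= p)%N.

Lemma adj_iso_hub z w f x : adj_iso z w f -> in_orbit z x ->
  (f x 0 == ord0) = (x 0 == ord0).
Proof.
case=> _ f_step zx; apply/idP/idP; apply: contraTT => /(step_loop p2) loop;
  apply/(step_loop p2); exact/(f_step _ _ zx zx).
Qed.

Definition peel f y := shift (f (wcons ord0 y)).

Section Peel.
Variables (z w : word p) (f : word p -> word p).
Hypothesis F : adj_iso z w f.

Lemma peel_hub y : in_orbit (shift z) y -> f (wcons ord0 y) = wcons ord0 (peel f y).
Proof.
move=> /(orbit_wcons z ord0) zy; apply/hub_eq/eqP.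
by rewrite (adj_iso_hub F zy).
Qed.

Lemma peel_orbit y : in_orbit (shift z) y -> in_orbit (shift w) (peel f y).
Proof.
case: F => -[f_orb _ _] _ /(orbit_wcons z ord0) zy.
exact/orbit_shift/f_orb.
Qed.

Lemma peelK g : (forall x, in_orbit z x -> g (f x) = x) ->
  forall y, in_orbit (shift z) y -> peel g (peel f y) = y.
Proof. by move=> gK y zy; rewrite {1}/peel -(peel_hub zy) gK //; apply/orbit_wcons. Qed.

Lemma links_transfer t a b : in_orbit z t ->
  in_orbit (shift z) a -> in_orbit (shift z) b ->
  links t a b -> links (f t) (peel f a) (peel f b).
Proof.
have [[f_orb f_inj f_surj] f_step] := F.
move=> zt za zb [t0 ta tb hubs].
have [za0 zb0] : in_orbit z (wcons ord0 a) /\ in_orbit z (wcons ord0 b).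
  by split; apply/orbit_wcons.
split.
- by rewrite (adj_iso_hub F zt).
- by rewrite -(peel_hub za); apply/(f_step _ _ zt za0).
- by rewrite -(peel_hub zb); apply/(f_step _ _ zt zb0).
move=> h h0 fth.
have [x [zx fx]] := f_surj h (orbit_step (f_orb _ zt) fth).
have x0 : x 0 = ord0 by apply/eqP; rewrite -(adj_iso_hub F zx) fx h0.
rewrite -fx -(peel_hub za) -(peel_hub zb).
by case: (hubs x x0) => [|->|->]; [apply/(f_step _ _ zt zx); rewrite fx|left|right].
Qed.

Lemma peel_step a b : in_orbit (shift z) a -> in_orbit (shift z) b ->
  step a b -> step (peel f a) (peel f b).
Proof.
move=> za zb /step_links[t abt]; apply/step_links; exists (f t).
apply: links_transfer => //.
case: abt => _ ta _ _; exact: orbit_step ((orbit_wcons z ord0 a).2 za) (step_sym ta).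
Qed.

End Peel.

Lemma peel_adj_iso z w f : adj_iso z w f -> adj_iso (shift z) (shift w) (peel f).
Proof.
move=> F; have [g [G gK fK]] := adj_iso_inv F.
split; first split.
- exact: peel_orbit.
- by move=> a b za zb e; rewrite -(peelK F gK za) -(peelK F gK zb) e.
- move=> y wy; exists (peel g y); split; [exact (peel_orbit G wy)|exact (peelK G fK wy)].
move=> a b za zb; split; first exact (peel_step F za zb).
by move/(peel_step G (peel_orbit F za) (peel_orbit F zb)); rewrite !(peelK F gK).
Qed.

(* For a non-hub v = kc, the tail of its second hub neighbour 0(e_k^-1 c). *)
Definition alt_tail v := if v 0 == ord0 then shift v else geninv (v 0) (shift v).

Lemma peel_root z w f : adj_iso z w f ->
  peel f (shift z) = shift (f z) \/ peel f (shift z) = alt_tail (f z).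
Proof.
move=> F; have zz : in_orbit z z := rt_refl.
have [z0|z0] := eqVneq (z 0) ord0; first by left; rewrite /peel -(hub_eq z0).
have zs : step z (wcons ord0 (shift z)).
  by exists (z 0); split; [rewrite ord_gt0|left; rewrite gen_head].
have fz0 : f z 0 != ord0 by rewrite (adj_iso_hub F zz).
have := (F.2 _ _ zz (orbit_step zz zs)).1 zs.
rewrite (peel_hub F rt_refl) -{1}(wcons_shift (f z)).
case/(step_to_hub fz0) => [|e]; first by left.
by right; rewrite /alt_tail (negbTE fz0) e geninvK.
Qed.

Definition rooted_iso w v z := exists f, adj_iso z w f /\ f z = v.

Lemma rooted_iso_shift w v z : rooted_iso w v z ->
  (z 0 == ord0) = (v 0 == ord0) /\
  (rooted_iso (shift w) (shift v) (shift z) \/ rooted_iso (shift w) (alt_tail v) (shift z)).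
Proof.
case=> f [F <-]; split; first by rewrite (adj_iso_hub F rt_refl).
by case: (peel_root F) => e; [left|right]; exists (peel f); split => //; exact: peel_adj_iso.
Qed.

End Isomorphisms.

(** * Counting admissible prefixes *)

Lemma count_has_le (T U : Type) (Q : U -> pred T) (s : seq U) (l : seq T) :
  (count (fun x => has (Q^~ x) s) l <= \sum_(y <- s) count (Q y) l)%N.
Proof.
elim: s => [|y s IH]; first by rewrite big_nil (eq_count (a2 := pred0)) ?count_pred0.
rewrite big_cons; apply: leq_trans (leq_add (leqnn _) IH).
by rewrite -count_predUI; apply: leq_trans (leq_addr _ _); apply: sub_count.
Qed.

Section Counting.
Variable p : nat.
Hypothesis p2 : (2 <= p)%N.
Implicit Types (w v z : word p) (a : 'I_p.+1) (u : seq 'I_p.+1).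

Definition admissible w v u := `[< exists z, rooted_iso w v z /\ cylinder u z >].

Definition tails v := undup [:: shift v; alt_tail v].

Lemma admissible_cons w v a u : admissible w v (a :: u) ->
  (a == ord0) = (v 0 == ord0) /\ has (fun v' => admissible (shift w) v' u) (tails v).
Proof.
move=> /asboolP[z [zv zu]]; have z0 : z 0 = a by apply: (zu 0).
have zu' : cylinder u (shift z) by move=> k; apply: (zu k.+1).
have [<- tl] := rooted_iso_shift p2 zv; rewrite z0; split => //.
rewrite (eq_has_r (mem_undup _)) /=.
by case: tl => ok; apply/orP; [left|right; rewrite orbF]; apply/asboolP; exists (shift z).
Qed.

Fixpoint words n : seq (seq 'I_p.+1) :=
  if n is n'.+1 then [seq a :: u | a <- enum 'I_p.+1, u <- words n'] else [:: [::]].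

Lemma mem_words n u : (u \in words n) = (size u == n).
Proof.
elim: n u => [|n IH] [|a u] //=.
  by apply/allpairsP => -[[b u'] [_ _]].
rewrite eqSS -IH; apply/allpairsP/idP => [[[b u'] [_ /= + [_ ->]]] //|uw].
by exists (a, u); rewrite mem_enum.
Qed.

Lemma count_words_succ (P : pred (seq 'I_p.+1)) n :
  count P (words n.+1) = (\sum_a count (fun u => P (a :: u)) (words n))%N.
Proof.
rewrite count_flatten sumnE !big_map -enumT big_enum.
by apply: eq_bigr => a _; rewrite count_map.
Qed.

Lemma card_hub_status (b : bool) :
  #|[set a : 'I_p.+1 | (a == ord0) == b]| = if b then 1%N else p.
Proof.
case: b; first by rewrite -(card1 (@ord0 p)); apply: eq_card => a; rewrite !inE eqb_id.
transitivity #|predC1 (@ord0 p)|; last by rewrite cardC1 card_ord.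
by apply: eq_card => a; rewrite !inE eqbF_neg.
Qed.

Lemma count_admissible_succ n w v : (count (admissible w v) (words n.+1) <=
  (if v 0 == ord0 then 1 else p) *
    \sum_(v' <- tails v) count (admissible (shift w) v') (words n))%N.
Proof.
rewrite count_words_succ -card_hub_status -sum_nat_cond_const.
rewrite (bigID [pred a | (a == ord0) == (v 0 == ord0)]) /= -[X in (_ <= X)%N]addn0.
apply: leq_add.
  apply: leq_sum => a _; apply: leq_trans (count_has_le _ _ _).
  by apply: sub_count => u /admissible_cons[].
rewrite leqn0 big1 // => a hub_a; rewrite -(count_pred0 (words n)); apply: eq_count => u /=.
by apply/negP => /admissible_cons[e _]; rewrite e eqxx in hub_a.
Qed.

Fixpoint growth n : nat * nat :=
  if n is n'.+1 then ((growth n').2, p * ((growth n').1 + (growth n').2))%N else (1, 1)%N.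

Lemma growth_le n : ((growth n).1 <= (growth n).2)%N.
Proof.
case: n => //= n; apply: leq_trans (leq_addl (growth n).1 _) _.
by rewrite leq_pmull // ltnW.
Qed.

Definition adm_bound n v := if v 0 == ord0 then (growth n).1 else (growth n).2.

Lemma adm_bound_le_growth n v : (adm_bound n v <= (growth n).2)%N.
Proof. by rewrite /adm_bound; case: ifP => _; rewrite ?growth_le. Qed.

Lemma adm_bound_le n v : (adm_bound n v <= (growth n).1 + (growth n).2)%N.
Proof. by rewrite /adm_bound; case: ifP => _; [apply: leq_addr|apply: leq_addl]. Qed.

Lemma alt_tail_status v : v 0 != ord0 -> shift v != alt_tail v ->
  (shift v 0 == ord0) = ~~ (alt_tail v 0 == ord0).
Proof.
move=> v0; rewrite /alt_tail (negbTE v0); move: (v 0) v0 (shift v) => k k0 s.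
rewrite -(wcons_shift s); move: (s 0) (shift s) => a y.
rewrite geninv_cons; case: (eqVneq a k) => [->|ak] /=; first by rewrite (negbTE k0).
by case: (eqVneq a ord0) => [->|a0] /=; rewrite ?eqxx ?(negbTE k0).
Qed.

Lemma tails_bound n v : v 0 != ord0 ->
  (\sum_(v' <- tails v) adm_bound n v' <= (growth n).1 + (growth n).2)%N.
Proof.
move=> v0; rewrite /tails /= inE.
have [<-|ne] := eqVneq (shift v) (alt_tail v); first by rewrite big_seq1 adm_bound_le.
rewrite big_cons big_seq1 /adm_bound (alt_tail_status v0 ne).
by case: (alt_tail v 0 == ord0); rewrite // addnC.
Qed.

Lemma count_admissible_le n w v : (count (admissible w v) (words n) <= adm_bound n v)%N.
Proof.
elim: n w v => [|n IH] w v.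
  by rewrite /adm_bound /=; case: (admissible _ _ _); case: ifP.
apply: leq_trans (count_admissible_succ n w v) _.
have sum_le : (\sum_(v' <- tails v) count (admissible (shift w) v') (words n)
    <= \sum_(v' <- tails v) adm_bound n v')%N.
  by apply: leq_sum => v' _; apply: IH.
rewrite /adm_bound /=; case: ifP => v0.
  have tv : tails v = [:: shift v] by rewrite /tails /alt_tail v0 /= inE eqxx.
  by rewrite mul1n (leq_trans sum_le) // tv big_seq1 adm_bound_le_growth.
by rewrite leq_mul2l (leq_trans sum_le) ?orbT // tails_bound ?v0.
Qed.

End Counting.

Lemma expn_bernoulli T n : ((T + n) * T ^ n <= T * (T + 1) ^ n)%N.
Proof.
elim: n => [|n IH]; first by rewrite addn0.
rewrite !expnS; apply: leq_trans (_ : (T + n) * T ^ n * (T + 1) <= _)%N.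
  by rewrite addnS mulnDr; nia.
by rewrite [X in (X <= _)%N]mulnC [X in (_ <= X)%N]mulnCA leq_mul2l IH orbT.
Qed.

Section GrowthRate.
Variable p : nat.

(* growth p n <= 2 (rate / (p + 2))^n and rate / (p + 2) = p + 1 - 1 / (p + 2). *)
Definition rate := (p * (p + 2) + p + 1)%N.

Lemma growth_pow n : ((growth p n).2 * (p + 2) ^ n <= 2 * rate ^ n)%N.
Proof.
suff [] : ((growth p n).2 * (p + 2) ^ n <= 2 * rate ^ n)%N /\
          ((growth p n.+1).2 * (p + 2) ^ n.+1 <= 2 * rate ^ n.+1)%N by [].
elim: n => [|n [IH1 IH2]]; first by rewrite /= /rate !expn0 !expn1; split; lia.
split=> //; set q := (p + 2)%N; set T := rate.
have key : (p * q * q + p * q * T <= T * T)%N by rewrite /q /T /rate; nia.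
have -> : ((growth p n.+2).2 * q ^ n.+2 =
    p * q * q * ((growth p n).2 * q ^ n) + p * q * ((growth p n.+1).2 * q ^ n.+1))%N.
  by rewrite /= !expnS; ring.
apply: leq_trans (leq_add (leq_mul (leqnn _) IH1) (leq_mul (leqnn _) IH2)) _.
have -> : (p * q * q * (2 * T ^ n) + p * q * (2 * T ^ n.+1) =
    (p * q * q + p * q * T) * (2 * T ^ n))%N by rewrite expnS; ring.
have -> : (2 * T ^ n.+2 = T * T * (2 * T ^ n))%N by rewrite !expnS; ring.
by rewrite leq_mul2r key orbT.
Qed.

Lemma growth_decay n : ((growth p n).2 * (rate + n) <= 2 * rate * p.+1 ^ n)%N.
Proof.
have q_gt0 : (0 < (p + 2) ^ n)%N by rewrite expn_gt0 addn_gt0 orbT.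
rewrite -(leq_pmul2r q_gt0).
have -> : ((growth p n).2 * (rate + n) * (p + 2) ^ n =
    (rate + n) * ((growth p n).2 * (p + 2) ^ n))%N by ring.
apply: leq_trans (leq_mul (leqnn _) (growth_pow n)) _.
have -> : ((rate + n) * (2 * rate ^ n) = 2 * ((rate + n) * rate ^ n))%N by ring.
have -> : (2 * rate * p.+1 ^ n * (p + 2) ^ n = 2 * (rate * (rate + 1) ^ n))%N.
  by rewrite (_ : rate + 1 = p.+1 * (p + 2))%N ?expnMn /rate; ring.
by rewrite leq_mul2l expn_bernoulli orbT.
Qed.

End GrowthRate.

(** * Null sets *)

Import GRing.Theory Num.Theory Order.TTheory.
Local Open Scope ring_scope.

Section EnumerateLists.
Variables (T : Type) (d : T) (L : nat -> seq T).
Hypothesis L_nonempty : forall m, (0 < size (L m))%N.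

Let F N := flatten [seq L m | m <- iota 0 N].

Let F_succ N : F N.+1 = F N ++ L N.
Proof. by rewrite /F -addn1 iotaD map_cat flatten_cat /= cats0. Qed.

Let size_F N : (N <= size (F N))%N.
Proof. by elim: N => // N IH; rewrite F_succ size_cat -addn1 leq_add. Qed.

Let F_prefix N M : (N <= M)%N -> exists r, F M = F N ++ r.
Proof.
move/subnKC <-; elim: (M - N)%N => [|k [r IH]]; first by exists [::]; rewrite addn0 cats0.
by exists (r ++ L (N + k)); rewrite addnS F_succ IH catA.
Qed.

Definition enum_lists n := nth d (F n.+1) n.

Let enum_listsE n N : (n < N)%N -> enum_lists n = nth d (F N) n.
Proof.
by case/F_prefix=> r ->; rewrite /enum_lists nth_cat (leq_trans _ (size_F n.+1)).
Qed.

Lemma enum_lists_onto m i : (i < size (L m))%N -> exists n, enum_lists n = nth d (L m) i.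
Proof.
move=> lt_i; exists (size (F m) + i)%N; rewrite (enum_listsE (ltnSn _)).
have [|r ->] := @F_prefix m.+1 (size (F m) + i).+1.
  by rewrite ltnS (leq_trans (size_F m)) ?leq_addr.
by rewrite F_succ -catA nth_cat ltnNge leq_addr /= addKn nth_cat lt_i.
Qed.

Lemma ler_sum_enum_lists (R : numDomainType) (g : T -> R) N : (forall x, 0 <= g x) ->
  \sum_(n < N) g (enum_lists n) <= \sum_(m < N) \sum_(x <- L m) g x.
Proof.
move=> g_ge0; have -> : \sum_(m < N) \sum_(x <- L m) g x = \sum_(x <- F N) g x.
  by rewrite big_flatten big_map -(subn0 N) -/(index_iota 0 N) big_mkord subn0.
rewrite -(cat_take_drop N (F N)) big_cat /=.
have -> : \sum_(n < N) g (enum_lists n) = \sum_(x <- take N (F N)) g x.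
  rewrite (big_nth d) size_takel ?size_F // big_mkord.
  by apply: eq_bigr => i _; rewrite nth_take // (enum_listsE (ltn_ord i)).
by rewrite lerDl; apply: sumr_ge0.
Qed.

End EnumerateLists.

Section NullSets.
Variable p : nat.
Implicit Types (A B : word p -> Prop) (u : seq 'I_p.+1) (L : seq (seq 'I_p.+1)).

Definition wt u : rat := ((p.+1 ^ size u)%:R)^-1.

Definition mass L := \sum_(u <- L) wt u.

Definition covers L A := forall z, A z -> exists2 u, u \in L & cylinder u z.

Definition finitely_null A :=
  forall eps : rat, 0 < eps -> exists L, covers L A /\ mass L <= eps.

Lemma wt_ge0 u : 0 <= wt u.
Proof. by rewrite invr_ge0 ler0n. Qed.

Lemma wt_small : (0 < p)%N -> forall eps : rat, 0 < eps -> exists k, wt (nseq k ord0) <= eps.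
Proof.
move=> p0 eps e0; set k := Num.Def.archi_bound eps^-1; exists k.
rewrite /wt size_nseq -[eps]invrK lef_pV2 ?posrE ?invr_gt0 ?ltr0n ?expn_gt0 //.
have k_gt : eps^-1 < k%:R by apply/archi_boundP/ltW; rewrite invr_gt0.
apply/ltW/(lt_le_trans k_gt); rewrite ler_nat.
by apply/ltnW/ltn_expl; rewrite ltnS.
Qed.

Lemma finitely_null_nonempty A : (0 < p)%N -> finitely_null A ->
  forall eps : rat, 0 < eps -> exists L, [/\ (0 < size L)%N, covers L A & mass L <= eps].
Proof.
move=> p0 A0 eps e0; have e2 : 0 < eps / 2%:R by rewrite divr_gt0.
have [L [cov mL]] := A0 _ e2; have [k wk] := wt_small p0 e2.
exists (nseq k ord0 :: L); split => //.
  by move=> z /cov[u uL zu]; exists u; rewrite // in_cons uL orbT.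
by rewrite /mass big_cons (splitr eps) lerD.
Qed.

Lemma nu_null_sub A B : (forall z, A z -> B z) -> nu_null B -> nu_null A.
Proof.
move=> AB B0 eps /B0[U [cov mU]]; exists U; split => // z /AB; exact: cov.
Qed.

Lemma sum_halves N : \sum_(m < N) (2%:R ^+ m.+1)^-1 = 1 - (2%:R ^+ N)^-1 :> rat.
Proof.
elim: N => [|N IH]; first by rewrite big_ord0 expr0 invr1 subrr.
rewrite big_ord_recr /= IH !exprS; field.
by rewrite expf_neq0.
Qed.

Lemma nu_null_bigcup (A : nat -> word p -> Prop) : (0 < p)%N ->
  (forall m, finitely_null (A m)) -> nu_null (fun z => exists m, A m z).
Proof.
move=> p0 A0 eps e0.
have em m : 0 < eps * (2%:R ^+ m.+1)^-1 by rewrite mulr_gt0 ?invr_gt0 ?exprn_gt0.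
have /choice[L LP] : forall m, exists L,
    [/\ (0 < size L)%N, covers L (A m) & mass L <= eps * (2%:R ^+ m.+1)^-1].
  by move=> m; apply: finitely_null_nonempty (em m).
have L_pos m : (0 < size (L m))%N by case: (LP m).
have L_mass m : mass (L m) <= eps * (2%:R ^+ m.+1)^-1 by case: (LP m).
exists (enum_lists [::] L); split.
  move=> z [m]; case: (LP m) => _ cov _ /cov[u uL zu].
  have [|n en] := enum_lists_onto [::] L_pos (m := m) (i := index u (L m)).
    by rewrite index_mem.
  by exists n; rewrite en nth_index.
move=> N; apply: le_trans (ler_sum_enum_lists [::] L_pos N wt_ge0) _.
apply: le_trans (ler_sum _ (fun (m : 'I_N) _ => L_mass m)) _.
rewrite -mulr_sumr sum_halves; apply: ler_piMr; first exact: ltW.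
by rewrite gerBl invr_ge0 exprn_ge0.
Qed.

End NullSets.

Section RootedIsoNull.
Variable p : nat.
Hypothesis p2 : (2 <= p)%N.

Lemma mass_filter_words n (P : pred (seq 'I_p.+1)) :
  mass [seq u <- words p n | P u] = (count P (words p n))%:R / (p.+1 ^ n)%:R.
Proof.
rewrite /mass (eq_big_seq (fun _ => ((p.+1 ^ n)%:R)^-1)) => [|u].
  by rewrite (big_const_seq _ _ _ predT) count_predT size_filter iter_addr_0 mulr_natl.
by rewrite mem_filter mem_words => /andP[_ /eqP]; rewrite /wt => ->.
Qed.

Lemma rooted_iso_finitely_null (w v : word p) : finitely_null (rooted_iso w v).
Proof.
move=> eps e0; set T := rate p.
set n := Num.Def.archi_bound ((2 * T)%:R / eps).
have n_gt : (2 * T)%:R < eps * n%:R.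
  by rewrite mulrC -ltr_pdivrMr // archi_boundP // divr_ge0 // ltW.
exists [seq u <- words p n | admissible w v u]; split.
  move=> z zwv; have zn : cylinder (mkseq z n) z.
    by move=> k; rewrite size_mkseq => kn; rewrite nth_mkseq.
  exists (mkseq z n) => //; rewrite mem_filter mem_words size_mkseq eqxx andbT.
  by apply/asboolP; exists z.
rewrite mass_filter_words ler_pdivrMr ?ltr0n ?expn_gt0 //.
have count_decay : (count (admissible w v) (words p n) * (T + n) <= 2 * T * p.+1 ^ n)%N.
  apply: leq_trans (growth_decay p n); rewrite leq_mul2r; apply/orP; right.
  exact: leq_trans (count_admissible_le p2 n w v) (adm_bound_le_growth p2 n v).
have Tn_gt0 : 0 < (T + n)%:R :> rat by rewrite ltr0n addn_gt0 /T /rate; lia.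
rewrite -(ler_pM2r Tn_gt0) -natrM.
apply: le_trans (_ : (2 * T * p.+1 ^ n)%:R <= _); first by rewrite ler_nat.
rewrite natrM [X in _ <= X]mulrAC ler_pM2r ?ltr0n ?expn_gt0 //.
by apply/ltW/(lt_le_trans n_gt); rewrite ler_pM2l // ler_nat leq_addl.
Qed.

End RootedIsoNull.

Definition reach p (l : seq (bool * 'I_p.+1)) (x : word p) : word p :=
  foldr (fun bi y => if bi.1 then gen bi.2 y else geninv bi.2 y) x l.

Lemma orbit_reach p (w x : word p) : in_orbit w x -> exists l, x = reach l w.
Proof.
elim=> [u v [i [i0 [->|->]]]|u|u v t _ [l1 ->] _ [l2 ->]].
- by exists [:: (true, i)].
- by exists [:: (false, i)]; rewrite /= geninvK -?ord_gt0.
- by exists [::].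
- by exists (l2 ++ l1); rewrite /reach foldr_cat.
Qed.

Lemma orbit_countable p (w : word p) :
  exists e : nat -> word p, forall x, in_orbit w x -> exists m, e m = x.
Proof.
exists (fun m => reach (odflt [::] (unpickle m)) w) => x /orbit_reach[l ->].
by exists (pickle l); rewrite pickleK.
Qed.

Theorem corollary4p25 (p : nat) (hp : (2 <= p)%N) (w : word p) :
  nu_null (Iset w).
Proof.
have [e e_onto] := orbit_countable w.
apply: (@nu_null_sub _ _ (fun z => exists m, rooted_iso w (e m) z)).
  move=> z /schreier_iso_adj[f F]; have [[f_orb _ _] _] := F.
  have [m em] := e_onto (f z) (f_orb z rt_refl).
  by exists m, f; rewrite em.
by apply: nu_null_bigcup => [|m]; [apply: ltnW | apply: rooted_iso_finitely_null].
Qed.
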